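(* For every integer $d \ge 2$, there exist two monoids $H, H' \in \mathcal{C}_d$ with $\mathcal{L}(H) = \mathcal{L}(H')$ that are not isomorphic; that is, the system of sets of lengths does not characterize monoids in $\mathcal{C}_d$ up to isomorphism.
   Context: Monoids are commutative, cancellative, reduced. $\mathcal{C}_d$ is the collection of all rank-$d$ submonoids of free commutative monoids of finite rank (rank = rank of the Grothendieck group). For an atomic monoid $H$ and $x\in H$, $\mathsf{L}(x)$ is the set of all $n$ such that $x$ is a sum of $n$ atoms; $\mathcal{L}(H)=\{\mathsf{L}(x)\mid x\in H\}$ is the system of sets of lengths. *)

From HB Require Import structures.
From mathcomp Require Import all_boot all_order all_algebra.
Set Implicit Arguments. Unset Strict Implicit. Unset Printing Implicit Defensive.
Import Order.TTheory GRing.Theory Num.Theory.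
Local Open Scope ring_scope.

(* The free commutative monoid of rank n is N^n, represented as 'rV[nat]_n
   with pointwise addition. A submonoid of it is a subset containing 0 and
   closed under addition (such a monoid is automatically commutative,
   cancellative and reduced). *)
Definition is_submonoid (n : nat) (H : 'rV[nat]_n -> Prop) : Prop :=
  H 0 /\ (forall a b, H a -> H b -> H (a + b)).

Definition ratmx (n k : nat) (v : 'I_k -> 'rV[nat]_n) : 'M[rat]_(k, n) :=
  \matrix_(i < k, j < n) ((v i 0 j)%:R : rat).

(* Rank of the Grothendieck group of H (= the subgroup of Z^n generated by H)
   equals d: the maximal number of Q-linearly independent elements of H is d. *)
Definition monoid_rank (n : nat) (H : 'rV[nat]_n -> Prop) (d : nat) : Prop :=
  (exists v : 'I_d -> 'rV[nat]_n, (forall i, H (v i)) /\ \rank (ratmx v) = d)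
  /\ (forall k (v : 'I_k -> 'rV[nat]_n), (forall i, H (v i)) -> (\rank (ratmx v) <= d)%N).

Definition in_C (d n : nat) (H : 'rV[nat]_n -> Prop) : Prop :=
  is_submonoid H /\ monoid_rank H d.

(* Atoms of H (the only unit of H is 0). *)
Definition is_atom (n : nat) (H : 'rV[nat]_n -> Prop) (a : 'rV[nat]_n) : Prop :=
  H a /\ a <> 0 /\ (forall b c, H b -> H c -> a = b + c -> b = 0 \/ c = 0).

Definition lengths (n : nat) (H : 'rV[nat]_n -> Prop) (x : 'rV[nat]_n) (k : nat) : Prop :=
  exists s : seq 'rV[nat]_n, size s = k /\ (forall a, a \in s -> is_atom H a)
                             /\ \sum_(a <- s) a = x.

Definition same_system_of_lengths (n m : nat)
    (H : 'rV[nat]_n -> Prop) (H' : 'rV[nat]_m -> Prop) : Prop :=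
  (forall x, H x -> exists y, H' y /\ forall k, lengths H x k <-> lengths H' y k) /\
  (forall y, H' y -> exists x, H x /\ forall k, lengths H x k <-> lengths H' y k).

Definition monoid_iso (n m : nat)
    (H : 'rV[nat]_n -> Prop) (H' : 'rV[nat]_m -> Prop) : Prop :=
  exists f : 'rV[nat]_n -> 'rV[nat]_m,
    (forall a, H a -> H' (f a)) /\
    (forall a b, H a -> H b -> f (a + b) = f a + f b) /\
    (forall a b, H a -> H b -> f a = f b -> a = b) /\
    (forall y, H' y -> exists a, H a /\ f a = y).

(* Let H_c be the monoid of vectors of N^n whose coordinate sum (weight) is
   divisible by c, so that H_1 = N^n.  The atoms of H_c are the vectors of
   weight c, so L(x) = {|x|/c} for every x in H_c, and both H_1 and H_c have
   the system of sets of lengths {{k} | k in N}.  But for c >= 2 and n >= 2,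
   H_c is not factorial: a = (c-1)e_i + e_j gives
   a + a = c e_i + ((c-2)e_i + 2e_j), while in N^n twice an atom has no other
   factorization. *)
From mathcomp Require Import all_boot all_order all_algebra.
From mathcomp Require Import zify.
Set Implicit Arguments. Unset Strict Implicit. Unset Printing Implicit Defensive.
Import GRing.Theory Num.Theory.

Section Weight.
Context {n : nat}.
Implicit Types (x y a b : 'rV[nat]_n) (c m : nat).

Definition weight x : nat := \sum_j x ord0 j.

Definition weight_mult c x : Prop := c %| weight x.

Definition delta_row c (j : 'I_n) : 'rV[nat]_n := \row_k (c * (k == j))%N.

Lemma weightD x y : weight (x + y)%R = weight x + weight y.
Proof. by rewrite /weight -big_split; apply: eq_bigr => j _; rewrite mxE. Qed.

Lemma weight0 : weight 0%R = 0.
Proof. by rewrite /weight big1 // => j _; rewrite mxE. Qed.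

Lemma weight_eq0 x : weight x = 0 -> x = 0%R.
Proof.
move/eqP; rewrite /weight sum_nat_eq0 => /forallP x0.
by apply/matrixP => i j; rewrite (ord1 i) mxE; apply/eqP; exact: (implyP (x0 j)).
Qed.

Lemma leq_entry_weight x i j : x i j <= weight x.
Proof. by rewrite (ord1 i) /weight (bigD1 j) //= leq_addr. Qed.

Lemma row_addxx_eq0 x : (x + x)%R = x -> x = 0%R.
Proof. by move=> xx; apply: weight_eq0; move: (congr1 weight xx); rewrite weightD; lia. Qed.

Lemma weight_delta_row c j : weight (delta_row c j) = c.
Proof.
rewrite /weight (bigD1 j) //= big1 ?mxE ?eqxx ?muln1 ?addn0 // => k /negPf kj.
by rewrite mxE kj muln0.
Qed.

Lemma weight_sum (s : seq 'rV[nat]_n) c : (forall a, a \in s -> weight a = c) ->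
  weight (\sum_(a <- s) a) = size s * c.
Proof.
elim: s => [|a s IHs] wc; first by rewrite big_nil weight0.
rewrite big_cons weightD IHs => [|b bs]; last by apply: wc; rewrite inE bs orbT.
by rewrite wc ?mem_head //= mulSn.
Qed.

Lemma delta_row_split x : 0 < weight x -> exists j y, x = (delta_row 1 j + y)%R.
Proof.
move=> x_gt0; have [j xj_gt0] : exists j, 0 < x ord0 j.
  apply/existsP; apply: contraLR x_gt0; rewrite negb_exists => /forallP x0.
  by rewrite -leqNgt leqn0 /weight sum_nat_eq0; apply/forallP => j; rewrite -leqn0 leqNgt x0.
exists j, (\row_k (x ord0 k - (k == j))%N)%R.
apply/rowP => k; rewrite !mxE natrDE mul1n.
by case: eqP => [->|_]; rewrite ?add1n ?subn1 ?prednK ?add0n ?subn0.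
Qed.

Lemma weight_split x m : m <= weight x -> exists b y, x = (b + y)%R /\ weight b = m.
Proof.
elim: m x => [|m IHm] x m_le; first by exists 0%R, x; rewrite add0r weight0.
have [j [x' def_x]] := delta_row_split (leq_ltn_trans (leq0n m) m_le).
have [|b [y [def_x' wb]]] := IHm x'.
  by move: m_le; rewrite def_x weightD weight_delta_row.
by exists (delta_row 1 j + b)%R, y; rewrite def_x def_x' addrA weightD weight_delta_row wb.
Qed.

Lemma weight_mult_submonoid c : is_submonoid (weight_mult c).
Proof.
split; first by rewrite /weight_mult weight0 dvdn0.
by move=> a b; rewrite /weight_mult weightD; apply: dvdn_add.
Qed.

Lemma weight_mult_rank c : 0 < c -> monoid_rank (weight_mult c) n.
Proof.
move=> c_gt0; split; last by move=> k v _; apply: rank_leq_col.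
exists (delta_row c); split => [i|]; first by rewrite /weight_mult weight_delta_row.
have -> : ratmx (delta_row c) = ((c%:R : rat) *: 1%:M)%R.
  apply/matrixP => i j; rewrite !mxE eq_sym natrM.
  by case: eqP => _; rewrite ?mulr1 ?mulr0.
by rewrite mxrank_scale_nz ?mxrank1 // pnatr_eq0 -lt0n.
Qed.

Lemma weight_mult_in_C c : 0 < c -> in_C n (weight_mult c).
Proof. by move=> c_gt0; split; [apply: weight_mult_submonoid | apply: weight_mult_rank]. Qed.

Lemma weight_mult_atomP c : 0 < c -> forall a, is_atom (weight_mult c) a <-> weight a = c.
Proof.
move=> c_gt0 a; split=> [[/dvdnP[q wa] [a_neq0 a_irr]] | wa].
  have q_gt0 : 0 < q by case: q wa => // wa; case: a_neq0; apply: weight_eq0.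
  have [|b [y [a_by wb]]] := @weight_split a c; first by rewrite wa leq_pmull.
  have wy : weight y = (q - 1) * c by move: wa; rewrite a_by weightD wb mulnBl; lia.
  case: (a_irr b y) => // [||b0|y0].
  - by rewrite /weight_mult wb.
  - by rewrite /weight_mult wy dvdn_mull.
  - by move: wb; rewrite b0 weight0; lia.
  - by rewrite wa; move: wy; rewrite y0 weight0; nia.
split; first by rewrite /weight_mult wa.
split=> [a0|b y /dvdnP[p wb] /dvdnP[q wy] a_by]; first by move: wa; rewrite a0 weight0; lia.
move: wa; rewrite a_by weightD wb wy => pq.
have [p0|q0] : p = 0 \/ q = 0 by nia.
  by left; apply: weight_eq0; rewrite wb p0.
by right; apply: weight_eq0; rewrite wy q0.
Qed.

Lemma weight_mult_lengthsP c : 0 < c -> forall x k,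
  lengths (weight_mult c) x k <-> k * c = weight x.
Proof.
move=> c_gt0 x k; split=> [[s [<- [s_atoms <-]]] | ].
  by rewrite (@weight_sum _ c) // => a /s_atoms /(weight_mult_atomP c_gt0) ->.
elim: k x => [|k IHk] x wx.
  by exists [::]; rewrite big_nil (@weight_eq0 x) // -wx.
have [|b [y [def_x wb]]] := @weight_split x c; first by rewrite -wx leq_pmull.
have [|s [sz [s_atoms sum_s]]] := IHk y.
  by move: wx; rewrite def_x weightD wb mulSn; lia.
exists (b :: s); rewrite /= sz big_cons def_x sum_s; split=> //; split=> // a.
by rewrite inE => /predU1P[->|/s_atoms //]; apply/(weight_mult_atomP c_gt0).
Qed.

Lemma weight_mult_lengths_scale c x y : 0 < c -> weight y = weight x * c ->
  forall k, lengths (weight_mult 1) x k <-> lengths (weight_mult c) y k.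
Proof.
move=> c_gt0 wy k; rewrite (weight_mult_lengthsP (ltn0Sn 0)) (weight_mult_lengthsP c_gt0).
by rewrite muln1 wy; split=> [->|/eqP]; rewrite ?eqn_pmul2r // => /eqP.
Qed.

Lemma weight_mult_same_lengths c : 0 < c ->
  same_system_of_lengths (weight_mult 1) (weight_mult c).
Proof.
move=> c_gt0; split=> [x _ | y /dvdnP[q wy]].
  have wxc : weight (x *+ c)%R = weight x * c.
    elim: c {c_gt0} => [|c IHc]; first by rewrite mulr0n weight0 muln0.
    by rewrite mulrS weightD IHc mulnS.
  exists (x *+ c)%R; split; first by rewrite /weight_mult wxc dvdn_mull.
  exact: weight_mult_lengths_scale.
have [|x [_ [_ wx]]] := @weight_split y q; first by rewrite wy leq_pmulr.
exists x; split; first exact: dvd1n.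
by apply: weight_mult_lengths_scale; rewrite // wx.
Qed.

End Weight.

(* A weak form of factoriality: in a factorial monoid, twice an atom a has
   a + a as its only factorization into two atoms. *)
Definition rigid_doubles n (H : 'rV[nat]_n -> Prop) : Prop :=
  forall a b b', is_atom H a -> is_atom H b -> is_atom H b' ->
    (a + a = b + b')%R -> b = b'.

Section IsoTransfer.
Variables (n m : nat) (H : 'rV[nat]_n -> Prop) (H' : 'rV[nat]_m -> Prop).
Variable f : 'rV[nat]_n -> 'rV[nat]_m.
Hypothesis H_submonoid : is_submonoid H.
Hypothesis f_into : forall a, H a -> H' (f a).
Hypothesis fD : forall a b, H a -> H b -> f (a + b)%R = (f a + f b)%R.
Hypothesis f_inj : forall a b, H a -> H b -> f a = f b -> a = b.
Hypothesis f_onto : forall y, H' y -> exists a, H a /\ f a = y.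

Lemma iso_map0 : f 0%R = 0%R.
Proof.
have H0 := proj1 H_submonoid.
by apply: row_addxx_eq0; rewrite -fD // addr0.
Qed.

Lemma iso_atom_preimage a : H a -> is_atom H' (f a) -> is_atom H a.
Proof.
move=> Ha [_ [fa_neq0 fa_irr]]; split=> //; split=> [a0|b c Hb Hc a_bc].
  by apply: fa_neq0; rewrite a0 iso_map0.
have H0 := proj1 H_submonoid.
have [|fb0|fc0] := fa_irr _ _ (f_into Hb) (f_into Hc); first by rewrite a_bc fD.
  by left; apply: f_inj; rewrite ?iso_map0.
by right; apply: f_inj; rewrite ?iso_map0.
Qed.

Lemma iso_rigid_doubles : rigid_doubles H -> rigid_doubles H'.
Proof.
move=> rigidH a b b' a_atom b_atom b'_atom aa_bb'.
have [x [Hx fx]] := f_onto (proj1 a_atom).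
have [y [Hy fy]] := f_onto (proj1 b_atom).
have [y' [Hy' fy']] := f_onto (proj1 b'_atom).
have HD := proj2 H_submonoid.
rewrite -fy -fy'; congr f; apply: (rigidH x).
- by apply: iso_atom_preimage; rewrite ?fx.
- by apply: iso_atom_preimage; rewrite ?fy.
- by apply: iso_atom_preimage; rewrite ?fy'.
- apply: f_inj; try exact: HD.
  by rewrite !fD // fx fy fy'.
Qed.

End IsoTransfer.

Lemma monoid_iso_rigid_doubles n m (H : 'rV[nat]_n -> Prop) (H' : 'rV[nat]_m -> Prop) :
  is_submonoid H -> monoid_iso H H' -> rigid_doubles H -> rigid_doubles H'.
Proof.
move=> H_sub [f [f_into [fD [f_inj f_onto]]]].
exact: (iso_rigid_doubles H_sub f_into fD f_inj f_onto).
Qed.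

Lemma weight_mult1_rigid_doubles n : rigid_doubles (@weight_mult n 1).
Proof.
move=> a b b' _ /(weight_mult_atomP (ltn0Sn 0)) wb /(weight_mult_atomP (ltn0Sn 0)) wb'.
move/rowP=> aa; apply/rowP=> j.
move: (aa j) (leq_entry_weight b 0%R j) (leq_entry_weight b' 0%R j).
rewrite !mxE !natrDE wb wb'; move: (a _ j) (b _ j) (b' _ j) => x y z; lia.
Qed.

Lemma weight_mult_not_rigid_doubles n c (i j : 'I_n) :
  1 < c -> i != j -> ~ rigid_doubles (@weight_mult n c).
Proof.
move=> c_gt1 ij rigid; have c_gt0 := ltnW c_gt1.
pose a : 'rV[nat]_n := (delta_row c.-1 i + delta_row 1 j)%R.
pose b := delta_row c i.
pose b' : 'rV[nat]_n := (delta_row (c - 2) i + delta_row 2 j)%R.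
have atom (z : 'rV[nat]_n) : weight z = c -> is_atom (weight_mult c) z.
  by move/(weight_mult_atomP c_gt0).
have wa : weight a = c by rewrite weightD !weight_delta_row; lia.
have wb' : weight b' = c by rewrite weightD !weight_delta_row; lia.
have aa : (a + a = b + b')%R.
  apply/rowP=> k; rewrite !mxE !natrDE.
  by have [->|_] := eqVneq k i; rewrite ?(negPf ij) ?eqxx; case: (k == j); lia.
have /rowP/(_ j) := rigid a b b' (atom a wa) (atom b (weight_delta_row _ _)) (atom b' wb') aa.
by rewrite !mxE eq_sym (negPf ij) eqxx; lia.
Qed.

Lemma weight_mult_not_iso n c (i j : 'I_n) :
  1 < c -> i != j -> ~ monoid_iso (@weight_mult n 1) (@weight_mult n c).
Proof.
move=> c_gt1 ij /(monoid_iso_rigid_doubles (weight_mult_submonoid 1)).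
by move/(_ (@weight_mult1_rigid_doubles n)); apply: weight_mult_not_rigid_doubles ij.
Qed.

Theorem proposition4p10 (d : nat) : (2 <= d)%N ->
  exists (n m : nat) (H : 'rV[nat]_n -> Prop) (H' : 'rV[nat]_m -> Prop),
    in_C d H /\ in_C d H' /\ same_system_of_lengths H H' /\ ~ monoid_iso H H'.
Proof.
case: d => [|[|d]] // _.
exists d.+2, d.+2, (weight_mult 1), (weight_mult 2).
split; first exact: weight_mult_in_C.
split; first exact: weight_mult_in_C.
split; first exact: weight_mult_same_lengths.
by apply: (@weight_mult_not_iso _ _ ord0 ord_max).
Qed.
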